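(* Let $K\ge1$, $\Delta_0,B>0$, and for $k=1,\dots,K$ let $m_k\ge0$ and $v_k\ge 0$ be given numbers (the mean and variance of user $k$'s SNR). Let $\mathcal{G}\subset\mathbb{R}^K$ be the set of $\mathbf{r}$ for which there exist $\mathbf{p},\mathbf{y}\in\mathbb{R}^K$ and a $2K\times2K$ real matrix $\mathbf{H}=\begin{bmatrix}\mathbf{H}^{xx}&\mathbf{H}^{x\phi}\\(\mathbf{H}^{x\phi})^{\rm T}&\mathbf{H}^{\phi\phi}\end{bmatrix}$ (with $K\times K$ blocks) satisfying: (C1) $r_k\ge0$ for all $k$; (C2) $r_k\le \Delta_0B\,p_k\log_2(1+y_k/p_k)$ for all $k$; (C3) $0\le p_k\le1$ for all $k$; (C4) $\sum_k p_k\le1$; (C5) $H^{x\phi}_{k,k}=y_k-p_km_k$ for all $k$; (C6) $H^{\phi\phi}_{k,k}=v_k$ and $H^{\phi\phi}_{i,j}=0$ for $i\ne j$; (C7) $H^{xx}_{k,k}\le p_k-p_k^2$ for all $k$; (C8) $\sum_{i,j}H^{xx}_{i,j}\le\sum_ip_i-(\sum_ip_i)^2$; (C9) $\mathbf{H}\succeq0$. For $\mathbf{w}\in\mathbb{R}^K$ with $\mathbf{w}>0$ and $\|\mathbf{w}\|_2=1$ let $\mathbf{r}^{\sim\mu(\cdot|\mathbf{w})}_{\mathcal{G}}=\arg\max_{\mathbf{r}\in\mathcal{G}}\langle\mathbf{w},\mathbf{r}\rangle$ (the estimated rates), let $f(\mathbf{r})=\sum_{k=1}^K\ln r_k$, and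 let $\mathbf{r}^*=\arg\max_{\mathbf{r}\in\mathcal{G}}f(\mathbf{r})$. Consider the problem (P2) of maximizing $f(\mathbf{r}^{\sim\mu(\cdot|\mathbf{w})}_{\mathcal{G}})$ over all $\mathbf{w}>0$ with $\|\mathbf{w}\|_2=1$. If $\mathbf{w}$ is such a weight vector with $|\langle\mathbf{w},\mathbf{r}^{\sim\mu(\cdot|\mathbf{w})}_{\mathcal{G}}-\mathbf{r}^*\rangle|=0$, then $\mathbf{w}$ is an optimal solution of (P2), i.e., it maximizes $f(\mathbf{r})$ in (P2).
   Context: $\langle\cdot,\cdot\rangle$ is the Euclidean inner product; $\mathbf{w}>0$ means all components are strictly positive; $\mathbf{H}\succeq 0$ means $\mathbf{H}$ is positive semidefinite. In (C2) the function $p\log_2(1+y/p)$ is understood as its perspective (value $0$ at $p=0$). The set $\mathcal{G}$ is a convex bounded set used to approximate the feasible rate region of a max-weight scheduler. *)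

From HB Require Import structures.
From mathcomp Require Import all_boot all_order all_algebra.
From mathcomp Require Import reals ereal exp.
Set Implicit Arguments. Unset Strict Implicit. Unset Printing Implicit Defensive.
Import Order.TTheory GRing.Theory Num.Theory.
Local Open Scope ring_scope.

Section Defs.
Variables (R : realType) (K : nat).

Definition dotv (w r : 'I_K -> R) : R := \sum_(i < K) w i * r i.
Definition norm2 (w : 'I_K -> R) : R := Num.sqrt (\sum_(i < K) w i ^+ 2).

Definition admissible_w (w : 'I_K -> R) : Prop :=
  (forall k, 0 < w k) /\ norm2 w = 1.

Definition log2 (x : R) : R := ln x / ln 2.

Definition psd n (M : 'M[R]_n) : Prop :=
  M^T = M /\ forall x : 'cV[R]_n, 0 <= (x^T *m M *m x) 0 0.

(* (C2) with the perspective convention: value 0 at p = 0; for p > 0 the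
   argument of the logarithm must lie in its domain (1 + y/p > 0). *)
Definition C2 (D0 B pk yk rk : R) : Prop :=
  if pk == 0 then rk <= 0
  else (0 < 1 + yk / pk) && (rk <= D0 * B * (pk * log2 (1 + yk / pk))).

Definition inG (D0 B : R) (m v : 'I_K -> R) (r : 'I_K -> R) : Prop :=
  exists (p y : 'I_K -> R) (Hxx Hxp Hpp : 'M[R]_K),
       (forall k, 0 <= r k)
    /\ (forall k, C2 D0 B (p k) (y k) (r k))
    /\ (forall k, 0 <= p k <= 1)
    /\ (\sum_(k < K) p k <= 1)
    /\ (forall k, Hxp k k = y k - p k * m k)
    /\ (forall i j, Hpp i j = if i == j then v i else 0)
    /\ (forall k, Hxx k k <= p k - p k ^+ 2)
    /\ (\sum_(i < K) \sum_(j < K) Hxx i j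
           <= \sum_(i < K) p i - (\sum_(i < K) p i) ^+ 2)
    /\ psd (block_mx Hxx Hxp Hxp^T Hpp).

(* f(r) = sum_k ln r_k, with the convention ln 0 = -oo (value in \bar R) *)
Definition flog (r : 'I_K -> R) : \bar R :=
  if [forall k, 0 < r k] then (\sum_(k < K) ln (r k))%:E else -oo%E.

End Defs.

From HB Require Import structures.
From mathcomp Require Import all_boot all_order all_algebra.
From mathcomp Require Import reals ereal exp.
Import Order.TTheory GRing.Theory Num.Theory.
Local Open Scope ring_scope.

(* The condition |<w, r~(w) - r^*>| = 0 says that r^* attains the maximal
   value of <w, .> over G; since the maximizer of <w, .> over G is unique,
   r^* is the estimated rate vector r~(w).  So f(r~(w)) = f(r^* ) is the
   maximum of f over all of G, and in particular dominates f(r~(w')) for every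
   admissible w'. *)

Lemma dotvBr (R : realType) (K : nat) (w r s : 'I_K -> R) :
  dotv w (fun k => r k - s k) = dotv w r - dotv w s.
Proof.
by rewrite /dotv -sumrB; apply: eq_bigr => i _; rewrite mulrBr.
Qed.

Lemma unique_maximizer_eq {R : numDomainType} {T : Type} {S : T -> Prop}
    {g : T -> R} {x y : T} :
  (forall z, S z -> g z <= g x) ->
  (forall z, S z -> (forall z', S z' -> g z' <= g z) -> z = x) ->
  S y -> g y = g x -> y = x.
Proof.
move=> x_max x_uniq Sy gyx; apply: x_uniq => // z' Sz'.
by rewrite gyx; exact: x_max.
Qed.

Theorem corollary2 (R : realType) (K : nat) (hK : (1 <= K)%N)
  (D0 B : R) (hD0 : 0 < D0) (hB : 0 < B)
  (m v : 'I_K -> R) (hm : forall k, 0 <= m k) (hv : forall k, 0 <= v k)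
  (rt : ('I_K -> R) -> ('I_K -> R))
  (hrt : forall w, admissible_w w ->
     inG D0 B m v (rt w) /\
     forall r, inG D0 B m v r -> dotv w r <= dotv w (rt w))
  (hrt_uniq : forall w, admissible_w w ->
     forall r, inG D0 B m v r ->
       (forall r', inG D0 B m v r' -> dotv w r' <= dotv w r) -> r = rt w)
  (rstar : 'I_K -> R)
  (hrstar : inG D0 B m v rstar /\
     forall r, inG D0 B m v r -> (flog r <= flog rstar)%E)
  (w : 'I_K -> R) (hw : admissible_w w)
  (h0 : `| dotv w (fun k => rt w k - rstar k) | = 0) :
  forall w', admissible_w w' -> (flog (rt w') <= flog (rt w))%E.
Proof.
move=> w' hw'.
have [rstar_in flog_le_rstar] := hrstar.
have dotv_rstar : dotv w rstar = dotv w (rt w).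
  by move/normr0_eq0/eqP: h0; rewrite dotvBr subr_eq0 => /eqP.
have rstar_eq : rstar = rt w.
  exact: (@unique_maximizer_eq R _ (inG D0 B m v) (dotv w) _ _ (hrt w hw).2 (hrt_uniq w hw) rstar_in dotv_rstar).
rewrite -rstar_eq.
exact: flog_le_rstar (hrt w' hw').1.
Qed.
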